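(* For $n \ge 2$, let $R_n$ denote the outcome of Domineering on the $2 \times n$ rectangle and $T_n$ the outcome on the $2 \times n$ torus. Then: (i) if $R_n = H$ then $T_n = H$; (ii) if $R_n = {\rm 1st}$ and $R_{n-1} \in \{{\rm 1st}, H\}$ then $T_n = H$; (iii) if $R_n = {\rm 1st}$ and $R_{n-1} \in \{{\rm 2nd}, V\}$ then $T_n = {\rm 1st}$; (iv) if $R_n \in \{{\rm 2nd}, V\}$ and $R_{n-1} \in \{{\rm 1st}, H\}$ then $T_n \in \{{\rm 2nd}, H\}$.
   Context: Domineering: Vera places vertical dominoes (covering two vertically adjacent empty cells), Hepzibah places horizontal dominoes (covering two horizontally adjacent empty cells); players alternate, and a player who cannot move on her turn loses. The $2\times n$ rectangle has $2$ rows and $n$ columns. The $2 \times n$ torus is the $2\times n$ array of cells with both pairs of opposite edges identified, so horizontal adjacency wraps around from column $n$ to column $1$ (and a vertical domino occupies both cells of a column). The outcome class is $V$ if Vera wins with optimal play regardless of who moves first, $H$ if Hepzibah wins regardless of who moves first, ${\rm 1st}$ if the first player wins, and ${\rm 2nd}$ if the second player wins. *)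

From mathcomp Require Import all_boot.
Set Implicit Arguments. Unset Strict Implicit. Unset Printing Implicit Defensive.

(* Cells are pairs (row, column) in
   'I_2 * 'I_n; a position is the set of occupied cells.
   Players: true = Vera (vertical), false = Hepzibah (horizontal).
   wrap = false : the 2 x n rectangle; wrap = true : the 2 x n torus
   (horizontal adjacency wraps from the last column to the first). *)

Definition board n := {set 'I_2 * 'I_n}.

Definition hnext (wrap : bool) n (j j' : 'I_n) : bool :=
  if wrap then val j' == (val j + 1) %% n else val j' == val j + 1.

Definition move (wrap : bool) n (p : bool) (b b' : board n) : Prop :=
  if p then
    exists j : 'I_n, (forall i : 'I_2, (i, j) \notin b) /\
      b' = b :|: [set c | c.2 == j]
  else
    exists (i : 'I_2) (j j' : 'I_n), hnext wrap j j' /\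
      (i, j) \notin b /\ (i, j') \notin b /\
      b' = b :|: [set (i, j); (i, j')].

Inductive wins (wrap : bool) n : bool -> board n -> Prop :=
| wins_move p b b' : move wrap p b b' -> loses wrap (~~ p) b' -> wins wrap p b
with loses (wrap : bool) n : bool -> board n -> Prop :=
| loses_all p b : (forall b', move wrap p b b' -> wins wrap (~~ p) b') ->
    loses wrap p b.

Inductive outcome := OV | OH | OFirst | OSecond.

Definition has_outcome (wrap : bool) n (o : outcome) : Prop :=
  let vf := wins wrap true (set0 : board n) in
  let hf := wins wrap false (set0 : board n) in
  match o with
  | OV => vf /\ ~ hf
  | OH => ~ vf /\ hf
  | OFirst => vf /\ hf
  | OSecond => ~ vf /\ ~ hf
  end.

Definition R n o := has_outcome false n o.
Definition T n o := has_outcome true n o.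

From mathcomp Require Import all_boot zify.
From Stdlib Require Import Classical.
Set Implicit Arguments. Unset Strict Implicit. Unset Printing Implicit Defensive.

(* Vera's moves do not depend on the wrapping and every horizontal domino of
   the rectangle is one of the torus, so the torus can only help Hepzibah:
   Hepzibah winning R_n moving first wins T_n moving first, and Vera losing
   R_n moving first loses T_n moving first.  Vera's first move on the torus
   fills a column; cutting the torus open there leaves a 2 x (n-1) rectangle
   with Hepzibah to move, so Vera wins T_n moving first iff Hepzibah loses
   R_(n-1) moving first.  Since the game is finite, "loses" is exactly "does
   not win", and the four cases follow by combining these facts. *)

Scheme wins_ind' := Induction for wins Sort Prop
  with loses_ind' := Induction for loses Sort Prop.
Combined Scheme wins_loses_ind from wins_ind', loses_ind'.

Section Determinacy.
Variables (w : bool) (n : nat).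
Implicit Types (p : bool) (b : board n).

Lemma wins_inv p b : wins w p b -> exists2 b', move w p b b' & loses w (~~ p) b'.
Proof. by case=> {}p {}b b' mv lost; exists b'. Qed.

Lemma loses_inv p b b' : loses w p b -> move w p b b' -> wins w (~~ p) b'.
Proof. by case=> {}p {}b won_after; apply: won_after. Qed.

Lemma winsNloses p b : wins w p b -> ~ loses w p b.
Proof.
move: p b; apply: (proj1 (@wins_loses_ind w n
  (fun p b _ => ~ loses w p b) (fun p b _ => ~ wins w p b) _ _)).
- by move=> p b b' mv _ IH /loses_inv/(_ mv).
- by move=> p b _ IH /wins_inv [b' mv]; exact: IH.
Qed.

Lemma move_free_card p b b' : move w p b b' -> #|~: b'| < #|~: b|.
Proof.
move=> mv; apply: proper_card; rewrite properC; apply/properP; split.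
  by case: p mv => [[j [_ ->]]|[i [j [j' [_ [_ [_ ->]]]]]]]; exact: subsetUl.
case: p mv => [[j [free ->]]|[i [j [j' [_ [free [_ ->]]]]]]] /=.
  by exists (ord0, j); rewrite ?inE ?eqxx ?orbT //; apply: free.
by exists (i, j); rewrite ?inE ?eqxx ?orbT.
Qed.

Lemma wins_or_loses p b : wins w p b \/ loses w p b.
Proof.
move: {2}#|~: b| (leqnn #|~: b|) => k; elim: k p b => [|k IH] p b le_bk.
  by right; constructor => b' /move_free_card; lia.
have [[b' [mv lost]]|no_win] :=
  classic (exists b', move w p b b' /\ loses w (~~ p) b').
  by left; exact: wins_move mv lost.
right; constructor => b' mv.
have [//|lost] := IH (~~ p) b' (leq_trans (move_free_card mv) le_bk).
by case: no_win; exists b'.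
Qed.

Lemma losesE p b : loses w p b <-> ~ wins w p b.
Proof.
split=> [lost won|]; first exact: winsNloses won lost.
by case: (wins_or_loses p b).
Qed.

End Determinacy.

Section Simulation.
Variables (w1 w2 : bool) (n1 n2 : nat) (f : board n1 -> board n2) (q : bool).
Hypothesis move_fwd : forall b b', move w1 q b b' -> move w2 q (f b) (f b').
Hypothesis move_bwd : forall b c, move w2 (~~ q) (f b) c ->
  exists2 b', move w1 (~~ q) b b' & c = f b'.

Lemma simulation :
  (forall p b, wins w1 p b -> p = q -> wins w2 p (f b)) /\
  (forall p b, loses w1 p b -> p = ~~ q -> loses w2 p (f b)).
Proof.
apply: (@wins_loses_ind w1 n1 (fun p b _ => p = q -> wins w2 p (f b))
                              (fun p b _ => p = ~~ q -> loses w2 p (f b))).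
- move=> p b b' mv _ IH Ep; subst p.
  by apply: wins_move (move_fwd mv) _; exact: IH.
- move=> p b _ IH Ep; subst p; constructor => c /move_bwd [b' mv ->].
  by apply: IH; rewrite ?negbK.
Qed.

Lemma wins_sim b : wins w1 q b -> wins w2 q (f b).
Proof. by move=> won; apply: (proj1 simulation). Qed.

Lemma loses_sim b : loses w1 (~~ q) b -> loses w2 (~~ q) (f b).
Proof. by move=> lost; apply: (proj2 simulation). Qed.

End Simulation.

Lemma hnext_rectE n (k k' : 'I_n) : hnext false k k' = (k' == k.+1 :> nat).
Proof. by rewrite /hnext addn1. Qed.

Lemma hnext_torusP n (k k' : 'I_n) : hnext true k k' <->
  (k.+1 < n /\ (k' : nat) = k.+1) \/ (k.+1 = n /\ (k' : nat) = 0).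
Proof.
rewrite /hnext addn1 /=; change (\val k') with (nat_of_ord k').
have := ltn_ord k; have := ltn_ord k' => lt_k'n lt_kn.
have [lt_k1n|] := ltnP k.+1 n.
  by rewrite modn_small //; split=> [/eqP|]; lia.
move=> ge_k1n; have -> : k.+1 = n by lia.
rewrite modnn; split=> [/eqP|]; lia.
Qed.

Section RectangleInTorus.
Variable n : nat.
Implicit Types b : board n.

Lemma rect_moveH_torus b b' : move false false b b' -> move true false b b'.
Proof.
move=> [i [j [j' [+ rest]]]]; rewrite hnext_rectE => /eqP next.
by exists i, j, j'; split=> //; apply/hnext_torusP; have := ltn_ord j'; lia.
Qed.

Lemma torus_moveV_rect b c :
  move true true b c -> exists2 b', move false true b b' & c = b'.
Proof. by exists c. Qed.

Lemma rect_winsH_torus b : wins false false b -> wins true false b.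
Proof. exact: (@wins_sim _ _ _ _ id _ rect_moveH_torus torus_moveV_rect). Qed.

Lemma rect_losesV_torus b : loses false true b -> loses true true b.
Proof. exact: (@loses_sim _ _ _ _ id _ rect_moveH_torus torus_moveV_rect). Qed.

Lemma torus_winsV_rect b : wins true true b -> wins false true b.
Proof.
move=> won; have [//|/rect_losesV_torus lost] := wins_or_loses false true b.
by case: (winsNloses won lost).
Qed.

End RectangleInTorus.

Section TorusCut.
Variables (m : nat) (j : 'I_m.+2).
Implicit Types (k : 'I_m.+1) (c : 'I_m.+2) (b : board m.+1).

(* Cutting the torus open at column [j]: column [k] of the 2 x (m+1)
   rectangle is column [j + 1 + k] (mod m+2) of the torus. *)
Definition torus_col k : 'I_m.+2 :=
  inord (if j + k.+1 < m.+2 then j + k.+1 else j + k.+1 - m.+2).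

Definition rect_col c : 'I_m.+1 :=
  inord (if j < c then c - j.+1 else c + m.+2 - j.+1).

Lemma torus_colP k :
  (j + k.+1 < m.+2 /\ torus_col k = j + k.+1 :> nat) \/
  (m.+2 <= j + k.+1 /\ torus_col k = j + k.+1 - m.+2 :> nat).
Proof.
have := ltn_ord j; have := ltn_ord k => lt_km lt_jm.
by rewrite /torus_col; case: ifP => cond; rewrite inordK; lia.
Qed.

Lemma rect_colP c : c != j ->
  (j < c /\ rect_col c = c - j.+1 :> nat) \/
  (c < j /\ rect_col c = c + m.+2 - j.+1 :> nat).
Proof.
move=> /eqP c_neq_j; have {}c_neq_j : (c : nat) <> j by move/ord_inj.
have := ltn_ord j; have := ltn_ord c => lt_cm lt_jm.
by rewrite /rect_col; case: ifP => cond; rewrite inordK; lia.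
Qed.

Lemma torus_col_neq k : torus_col k != j.
Proof.
apply/eqP => /(congr1 (@nat_of_ord _)); have := ltn_ord k; have := torus_colP k; lia.
Qed.

Lemma torus_colK : cancel torus_col rect_col.
Proof.
move=> k; apply: ord_inj; have := rect_colP (torus_col_neq k).
have := ltn_ord j; have := ltn_ord k; have := torus_colP k; lia.
Qed.

Lemma rect_colK c : c != j -> torus_col (rect_col c) = c.
Proof.
move=> c_neq_j; apply: ord_inj; have := rect_colP c_neq_j.
have := ltn_ord j; have := ltn_ord c; have := torus_colP (rect_col c); lia.
Qed.

Lemma rect_col_eq c k : c != j -> (rect_col c == k) = (c == torus_col k).
Proof.
by move=> c_neq_j; apply/eqP/eqP => [<-|->]; rewrite ?rect_colK ?torus_colK.
Qed.

Lemma hnext_torus_col k k' : hnext false k k' -> hnext true (torus_col k) (torus_col k').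
Proof.
rewrite hnext_rectE => /eqP next; apply/hnext_torusP.
have := ltn_ord j; have := ltn_ord k'; have := torus_colP k; have := torus_colP k'.
lia.
Qed.

Lemma hnext_rect_col c c' : c != j -> c' != j ->
  hnext true c c' -> hnext false (rect_col c) (rect_col c').
Proof.
move=> c_neq_j c'_neq_j /hnext_torusP next; rewrite hnext_rectE; apply/eqP.
have := ltn_ord j; have := ltn_ord c; have := ltn_ord c'.
have := rect_colP c_neq_j; have := rect_colP c'_neq_j.
have : (c : nat) <> j by move/ord_inj/eqP; rewrite (negPf c_neq_j).
have : (c' : nat) <> j by move/ord_inj/eqP; rewrite (negPf c'_neq_j).
lia.
Qed.

(* The torus position with column [j] filled whose cut at [j] is [b]. *)
Definition torus_of_rect b : board m.+2 :=
  [set c | (c.2 == j) || ((c.1, rect_col c.2) \in b)].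

Lemma in_torus_of_rect b i c :
  ((i, c) \in torus_of_rect b) = (c == j) || ((i, rect_col c) \in b).
Proof. by rewrite inE. Qed.

Lemma torus_of_rect0 : torus_of_rect set0 = set0 :|: [set c | c.2 == j].
Proof. by apply/setP => -[i c]; rewrite !inE orbF. Qed.

Lemma torus_of_rect_moveV b b' :
  move false true b b' -> move true true (torus_of_rect b) (torus_of_rect b').
Proof.
move=> [k [free ->]]; exists (torus_col k); split=> [i|].
  by rewrite in_torus_of_rect (negPf (torus_col_neq k)) torus_colK; exact: free.
apply/setP => -[i c]; rewrite !inE /=.
by case: (eqVneq c j) => [//|c_neq_j]; rewrite rect_col_eq.
Qed.

Lemma torus_of_rect_moveV_inv b t :
  move true true (torus_of_rect b) t ->
  exists2 b', move false true b b' & t = torus_of_rect b'.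
Proof.
move=> [k [free ->]].
have k_neq_j : k != j.
  by have := free ord0; rewrite in_torus_of_rect negb_or => /andP[].
exists (b :|: [set x | x.2 == rect_col k]).
  exists (rect_col k); split=> // i.
  by have := free i; rewrite in_torus_of_rect negb_or => /andP[].
apply/setP => -[i c]; rewrite !inE /=.
by case: (eqVneq c j) => [//|c_neq_j]; rewrite rect_col_eq // rect_colK.
Qed.

Lemma torus_of_rect_moveH b b' :
  move false false b b' -> move true false (torus_of_rect b) (torus_of_rect b').
Proof.
move=> [i [k [k' [next [free [free' ->]]]]]].
exists i, (torus_col k), (torus_col k'); split; first exact: hnext_torus_col.
rewrite !in_torus_of_rect !(negPf (torus_col_neq _)) !torus_colK.
split=> //; split=> //; apply/setP => -[i0 c]; rewrite !inE /=.
by case: (eqVneq c j) => [//|c_neq_j]; rewrite !xpair_eqE !rect_col_eq.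
Qed.

Lemma torus_of_rect_moveH_inv b t :
  move true false (torus_of_rect b) t ->
  exists2 b', move false false b b' & t = torus_of_rect b'.
Proof.
move=> [i [k [k' [next [+ [+ ->]]]]]].
rewrite !in_torus_of_rect !negb_or => /andP[k_neq_j free] /andP[k'_neq_j free'].
exists (b :|: [set (i, rect_col k); (i, rect_col k')]).
  by exists i, (rect_col k), (rect_col k'); split; first exact: hnext_rect_col.
apply/setP => -[i0 c]; rewrite !inE /=.
case: (eqVneq c j) => [//|c_neq_j].
by rewrite !xpair_eqE !rect_col_eq // !rect_colK.
Qed.

Lemma torus_of_rect_winsH b : wins false false b -> wins true false (torus_of_rect b).
Proof.
exact: (@wins_sim _ _ _ _ _ false torus_of_rect_moveH torus_of_rect_moveV_inv).
Qed.

Lemma torus_of_rect_losesH b : loses false false b -> loses true false (torus_of_rect b).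
Proof.
exact: (@loses_sim _ _ _ _ _ true torus_of_rect_moveV torus_of_rect_moveH_inv).
Qed.

End TorusCut.

Lemma torus_winsV_first m :
  wins true true (set0 : board m.+2) <-> ~ wins false false (set0 : board m.+1).
Proof.
split=> [/wins_inv [_ [j [_ ->]]]|/losesE lost].
  rewrite -(torus_of_rect0 j) => lostT /(torus_of_rect_winsH j) wonT.
  exact: winsNloses wonT lostT.
apply: (@wins_move _ _ _ _ (torus_of_rect ord0 set0));
  last exact: torus_of_rect_losesH.
by exists ord0; split=> [i|]; rewrite ?inE ?torus_of_rect0.
Qed.

Theorem mainTheorem13 (n : nat) (hn : 2 <= n) :
  (R n OH -> T n OH) /\
  (R n OFirst -> (R n.-1 OFirst \/ R n.-1 OH) -> T n OH) /\
  (R n OFirst -> (R n.-1 OSecond \/ R n.-1 OV) -> T n OFirst) /\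
  ((R n OSecond \/ R n OV) -> (R n.-1 OFirst \/ R n.-1 OH) ->
     (T n OSecond \/ T n OH)).
Proof.
case: n hn => [|[|m]] // _; rewrite /R /T /has_outcome /=.
have := @rect_winsH_torus m.+2 set0.
have := @torus_winsV_rect m.+2 set0.
have := @torus_winsV_first m.
have := classic (wins true false (set0 : board m.+2)).
tauto.
Qed.
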